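(* If the special tuples $(Y,y)$ and $(Y',y')$ are equivalent, then the first coordinates of $y$ and $y'$ with respect to the standard basis $e_1,\dots,e_{n+2}$ coincide: $y'_1=y_1$.
   Context: Let $n\ge 0$ be an integer and let $\widetilde K$ be a real symmetric $n\times n$ matrix with $\widetilde K^2=I_n$. Let $V=\mathbb R^{n+2}$ with standard basis $e_1,\dots,e_{n+2}$, and let $K=\begin{pmatrix}0&0&1\\0&\widetilde K&0\\1&0&0\end{pmatrix}$ (block sizes $1,n,1$). For $x,w\in V$ write $x^*=x^TK$ and $L_{u,w}=u\,w^*-w\,u^*$. Let $O(V,K)=\{P:P^TKP=K\}$, $\mathfrak o(V,K)=\{X:X^TK+KX=0\}$, $O(V,K)_{e_{n+2}}=\{P\in O(V,K):Pe_{n+2}=e_{n+2}\}$. A special tuple is a pair $(Y,y)$ with $Y\in\mathfrak o(V,K)$, $y\in V$. Two special tuples $(Y,y)$ and $(Y',y')$ are equivalent if there exist $P\in O(V,K)_{e_{n+2}}$, vectors $v,p\in V$ with $p^*(e_{n+2})=0$, and $v_0\in\mathbb R$ such that $Y'+L_{v,e_{n+2}}=P(Y+L_{p,y})P^{-1}$ and $y'=Py+v_0e_{n+2}$. *)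

From mathcomp Require Import all_boot all_order all_algebra.
From mathcomp Require Import reals.
Set Implicit Arguments. Unset Strict Implicit. Unset Printing Implicit Defensive.
Import GRing.Theory Num.Theory.
Local Open Scope ring_scope.

(* The (n+2)x(n+2) matrix K = [[0,0,1],[0,Kt,0],[1,0,0]] with block sizes 1,n,1,
   built on 'M_((1+n)+1) and cast to 'M_(n.+2). *)
Definition Kmat (R : realType) (n : nat) (Kt : 'M[R]_n) : 'M[R]_(n.+2) :=
  castmx (addn1 n.+1, addn1 n.+1)
    (block_mx (block_mx (0 : 'M[R]_(1,1)) (0 : 'M[R]_(1,n)) (0 : 'M[R]_(n,1)) Kt)
              (col_mx (1%:M : 'M[R]_1) (0 : 'M[R]_(n,1)))
              (row_mx (1%:M : 'M[R]_1) (0 : 'M[R]_(1,n)))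
              (0 : 'M[R]_1)).

(* standard basis vector e_{i+1} (0-based index i) *)
Definition ebasis (R : realType) (m : nat) (i : 'I_m) : 'cV[R]_m := delta_mx i 0.

Definition kstar (R : realType) (m : nat) (K : 'M[R]_m) (x : 'cV[R]_m) : 'rV[R]_m :=
  x^T *m K.

Definition Lop (R : realType) (m : nat) (K : 'M[R]_m) (u w : 'cV[R]_m) : 'M[R]_m :=
  u *m kstar K w - w *m kstar K u.

Definition in_OK (R : realType) (m : nat) (K P : 'M[R]_m) : Prop := P^T *m K *m P = K.

Definition in_oK (R : realType) (m : nat) (K X : 'M[R]_m) : Prop := X^T *m K + K *m X = 0.

Definition elast (R : realType) (n : nat) : 'cV[R]_(n.+2) := ebasis R ord_max.

Definition in_OK_stab (R : realType) (n : nat) (K P : 'M[R]_(n.+2)) : Prop :=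
  in_OK K P /\ P *m elast R n = elast R n.

Definition special_tuple (R : realType) (n : nat) (K : 'M[R]_(n.+2))
  (Y : 'M[R]_(n.+2)) (y : 'cV[R]_(n.+2)) : Prop := in_oK K Y.

Definition equiv_special (R : realType) (n : nat) (K : 'M[R]_(n.+2))
  (Y : 'M[R]_(n.+2)) (y : 'cV[R]_(n.+2)) (Y' : 'M[R]_(n.+2)) (y' : 'cV[R]_(n.+2)) : Prop :=
  exists (P : 'M[R]_(n.+2)) (v p : 'cV[R]_(n.+2)) (v0 : R),
    [/\ in_OK_stab K P,
        kstar K p *m elast R n = 0,
        Y' + Lop K v (elast R n) = P *m (Y + Lop K p y) *m invmx P
      & y' = P *m y + v0 *: elast R n].

(* The first coordinate of x is the K-pairing e_{n+2}^* x, since the last row of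
   K is e_1^T.  An isometry P fixing e_{n+2} preserves this pairing, so
   (P y)_1 = y_1, and the correction v0 e_{n+2} does not touch the first
   coordinate. *)

From mathcomp Require Import all_boot all_order all_algebra.
From mathcomp Require Import reals.
Set Implicit Arguments. Unset Strict Implicit. Unset Printing Implicit Defensive.
Import GRing.Theory.
Local Open Scope ring_scope.

Lemma Kmat_last_row (R : realType) (n : nat) (Kt : 'M[R]_n) (j : 'I_n.+2) :
  Kmat Kt ord_max j = (j == ord0)%:R.
Proof.
rewrite /Kmat castmxE /=.
have -> : cast_ord (esym (addn1 n.+1)) ord_max = rshift n.+1 (ord0 : 'I_1).
  by apply: val_inj; rewrite /= addn0.
have j0E : (j == ord0) = (j == 0%N :> nat) by [].
rewrite /block_mx col_mxEd j0E !mxE.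
case: split_ordP => k /(congr1 val) /= ->; rewrite ?mxE //.
case: split_ordP => l /(congr1 val) /= ->; rewrite ?mxE //.
by rewrite (ord1 l).
Qed.

Lemma kstar_elast_Kmat (R : realType) (n : nat) (Kt : 'M[R]_n) :
  kstar (Kmat Kt) (elast R n) = (ebasis R ord0)^T.
Proof.
apply/rowP => j; rewrite /kstar /elast /ebasis !trmx_delta -rowE !mxE.
by rewrite Kmat_last_row eqxx /= eq_sym.
Qed.

Lemma kstar_elast_Kmat_mul (R : realType) (n : nat) (Kt : 'M[R]_n)
    (x : 'cV[R]_n.+2) :
  (kstar (Kmat Kt) (elast R n) *m x) ord0 ord0 = x ord0 ord0.
Proof. by rewrite kstar_elast_Kmat /ebasis trmx_delta -rowE mxE. Qed.

Lemma kstar_mulmx_OK (R : realType) (m : nat) (K P : 'M[R]_m) (u w : 'cV[R]_m) :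
  in_OK K P -> kstar K (P *m u) *m (P *m w) = kstar K u *m w.
Proof.
by move=> PK; rewrite /kstar trmx_mul !mulmxA -(mulmxA _ P^T) -(mulmxA _ _ P) PK.
Qed.

Theorem lemma5 (R : realType) (n : nat) (Kt : 'M[R]_n)
  (HKsym : Kt^T = Kt) (HKinv : Kt *m Kt = 1%:M)
  (Y Y' : 'M[R]_(n.+2)) (y y' : 'cV[R]_(n.+2))
  (HY : special_tuple (Kmat Kt) Y y) (HY' : special_tuple (Kmat Kt) Y' y')
  (Heq : equiv_special (Kmat Kt) Y y Y' y') :
  y' ord0 ord0 = y ord0 ord0.
Proof.
case: Heq => P [v [p [v0 [[HPK HPe] _ _ ->]]]].
have elast_coord0 : elast R n ord0 ord0 = 0 by rewrite mxE.
rewrite mxE [in X in _ + X]mxE elast_coord0 mulr0 addr0.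
rewrite -(kstar_elast_Kmat_mul Kt (P *m y)) -(kstar_elast_Kmat_mul Kt y).
by rewrite -[in LHS]HPe kstar_mulmx_OK.
Qed.
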